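(* Let $1\le p\le2$, $A\in\mathbb{R}^{m\times n}$, let $\bar{x}\in\mathbb{R}^n$ have exactly $S\ge1$ nonzero groups, $b:=A\bar{x}$, and suppose the $(p,1)$-GREC$(S,S)$ holds. Let $\lambda>0$ and let $x^*$ be a global minimizer of $\|Ax-b\|_2^2+\lambda\|x\|_{p,1}$. Then $\|x^*-\bar{x}\|_2^2\le 2\lambda^2S/\phi_{p,1}^4(S,S)$; in particular $\|x^*-\bar{x}\|_2^2=O(\lambda^2S)$.
   Context: Group structure: $\{1,\dots,n\}$ is partitioned into disjoint nonempty index sets $\mathcal{G}_1,\dots,\mathcal{G}_r$; $x_{\mathcal{G}_i}$ is the subvector indexed by $\mathcal{G}_i$. For $\mathcal{J}\subseteq\{1,\dots,r\}$, $\|x_{\mathcal{G}_{\mathcal{J}}}\|_{p,q}:=(\sum_{i\in\mathcal{J}}\|x_{\mathcal{G}_i}\|_p^q)^{1/q}$ and $\|x\|_{p,q}:=\|x_{\mathcal{G}_{\{1,\dots,r\}}}\|_{p,q}$. For $\mathcal{J}\subseteq\{1,\dots,r\}$ and integer $N$, $\mathcal{J}(x;N)$ is the set of the $N$ indices $i\in\mathcal{J}^c$ with the largest $\|x_{\mathcal{G}_i}\|_p$ (ties broken arbitrarily). $\phi_{p,q}(S,N):=\inf\{\|Ax\|_2/\|x_{\mathcal{G}_{\mathcal{N}}}\|_{p,2}: x\ne0,\ |\mathcal{J}|\le S,\ \|x_{\mathcal{G}_{\mathcal{J}^c}}\|_{p,q}\le\|x_{\mathcal{G}_{\mathcal{J}}}\|_{p,q},\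 \mathcal{N}=\mathcal{J}(x;N)\cup\mathcal{J}\}$; the $(p,q)$-GREC$(S,N)$ holds if $\phi_{p,q}(S,N)>0$. *)

From Stdlib Require Import Reals Lra Lia List.
Open Scope R_scope.

Fixpoint sumR (k : nat) (f : nat -> R) : R :=
  match k with
  | O => 0
  | S k' => sumR k' f + f k'
  end.

(* a^y for a >= 0 (with 0^y = 0, used only with y > 0) *)
Definition rpow (a y : R) : R := if Rlt_dec 0 a then Rpower a y else 0.

Definition cardP (r : nat) (J : nat -> bool) : nat := length (filter J (seq 0 r)).

(* Group structure on {0..n-1}: index i belongs to group G_(g i), groups 0..r-1,
   all nonempty. *)
Definition is_group_partition (n r : nat) (g : nat -> nat) : Prop :=
  (forall i, (i < n)%nat -> (g i < r)%nat) /\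
  (forall j, (j < r)%nat -> exists i, (i < n)%nat /\ g i = j).

Definition gnorm (p : R) (n : nat) (g : nat -> nat) (x : nat -> R) (j : nat) : R :=
  rpow (sumR n (fun i => if Nat.eqb (g i) j then rpow (Rabs (x i)) p else 0)) (1 / p).

Definition mnorm (p q : R) (n r : nat) (g : nat -> nat) (x : nat -> R) (J : nat -> bool) : R :=
  rpow (sumR r (fun j => if J j then rpow (gnorm p n g x j) q else 0)) (1 / q).

Definition fnorm (p q : R) (n r : nat) (g : nat -> nat) (x : nat -> R) : R :=
  mnorm p q n r g x (fun _ => true).

Definition matvec (n : nat) (A : nat -> nat -> R) (x : nat -> R) (k : nat) : R :=
  sumR n (fun i => A k i * x i).

Definition sqnorm2 (m : nat) (v : nat -> R) : R := sumR m (fun k => v k ^ 2).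

Definition nonzero_vec (n : nat) (x : nat -> R) : Prop := exists i, (i < n)%nat /\ x i <> 0.

Definition group_nonzero (n : nat) (g : nat -> nat) (x : nat -> R) (j : nat) : Prop :=
  exists i, (i < n)%nat /\ g i = j /\ x i <> 0.

(* T is a valid choice of J(x;N): N indices (or all of them, if fewer than N
   remain) of J^c having the largest || x_{G_i} ||_p, ties broken arbitrarily. *)
Definition top_groups (p : R) (n r : nat) (g : nat -> nat) (x : nat -> R)
  (J : nat -> bool) (N : nat) (T : nat -> bool) : Prop :=
  (forall j, (j < r)%nat -> T j = true -> J j = false) /\
  cardP r T = Nat.min N (cardP r (fun j => negb (J j))) /\
  (forall j k, (j < r)%nat -> (k < r)%nat -> T j = true -> J k = false -> T k = false ->
     gnorm p n g x k <= gnorm p n g x j).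

Definition grec_ratios (p q : R) (m n r : nat) (g : nat -> nat) (A : nat -> nat -> R)
  (S N : nat) (t : R) : Prop :=
  exists (x : nat -> R) (J T : nat -> bool),
    nonzero_vec n x /\
    (cardP r J <= S)%nat /\
    mnorm p q n r g x (fun j => negb (J j)) <= mnorm p q n r g x J /\
    top_groups p n r g x J N T /\
    t = sqrt (sqnorm2 m (matvec n A x)) / mnorm p 2 n r g x (fun j => orb (T j) (J j)).

Definition is_inf (E : R -> Prop) (l : R) : Prop :=
  (forall y, E y -> l <= y) /\ (forall l', (forall y, E y -> l' <= y) -> l' <= l).

Definition is_phi (p q : R) (m n r : nat) (g : nat -> nat) (A : nat -> nat -> R)
  (S N : nat) (phi : R) : Prop :=
  is_inf (grec_ratios p q m n r g A S N) phi.

(* Put h = x* - xbar and let J be the set of support groups of xbar.  Comparing the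
   objective at x* with its value at xbar, and using the triangle inequality inside each
   group, gives ||Ah||^2 <= lambda (||h_J||_{p,1} - ||h_{J^c}||_{p,1}); so h lies in the
   GREC cone.  With N = J together with the S largest groups of h off J, the GREC and
   Cauchy-Schwarz on J give
     phi^2 ||h_N||_{p,2}^2 <= ||Ah||^2 <= lambda sqrt(S) ||h_N||_{p,2},
   i.e. ||h_N||_{p,2}^2 <= lambda^2 S / phi^4.  Each remaining group is no larger than
   the average of the S selected ones, which bounds the remaining part by ||h_N||_{p,2};
   finally p <= 2 gives ||h||_2 <= ||h||_{p,2}. *)

From Stdlib Require Import Reals Lra Lia List Classical Bool.
Open Scope R_scope.

Lemma Rdiv_le_0_compat a b : 0 <= a -> 0 < b -> 0 <= a / b.
Proof. intros Ha Hb. apply Rmult_le_pos; [exact Ha|left; apply Rinv_0_lt_compat, Hb]. Qed.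

Lemma Rdiv_le_1 a b : 0 < b -> a <= b -> a / b <= 1.
Proof. intros Hb Hab. apply Rmult_le_reg_r with b; [exact Hb|]. field_simplify; lra. Qed.

Lemma sumR_ext n f h : (forall i, (i < n)%nat -> f i = h i) -> sumR n f = sumR n h.
Proof.
  induction n as [|n IH]; simpl; intros H; auto.
  rewrite IH by (intros; apply H; lia). rewrite H by lia. reflexivity.
Qed.

Lemma sumR_le n f h : (forall i, (i < n)%nat -> f i <= h i) -> sumR n f <= sumR n h.
Proof.
  induction n as [|n IH]; simpl; intros H; [lra|].
  apply Rplus_le_compat; [apply IH; intros; apply H|apply H]; lia.
Qed.

Lemma sumR_plus n f h : sumR n (fun i => f i + h i) = sumR n f + sumR n h.
Proof. induction n as [|n IH]; simpl; [lra|]. rewrite IH; ring. Qed.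

Lemma sumR_scal n c f : sumR n (fun i => c * f i) = c * sumR n f.
Proof. induction n as [|n IH]; simpl; [lra|]. rewrite IH; ring. Qed.

Lemma sumR_minus n f h : sumR n (fun i => f i - h i) = sumR n f - sumR n h.
Proof. induction n as [|n IH]; simpl; [lra|]. rewrite IH; ring. Qed.

Lemma sumR_zero n : sumR n (fun _ => 0) = 0.
Proof. induction n as [|n IH]; simpl; [lra|]. rewrite IH; ring. Qed.

Lemma sumR_nonneg n f : (forall i, (i < n)%nat -> 0 <= f i) -> 0 <= sumR n f.
Proof. intros H. rewrite <- (sumR_zero n). apply sumR_le; auto. Qed.

Lemma sumR_term_le n f k :
  (forall i, (i < n)%nat -> 0 <= f i) -> (k < n)%nat -> f k <= sumR n f.
Proof.
  induction n as [|n IH]; simpl; intros H Hk; [lia|].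
  destruct (Nat.eq_dec k n) as [->|Hne].
  - assert (0 <= sumR n f) by (apply sumR_nonneg; intros; apply H; lia). lra.
  - assert (f k <= sumR n f) by (apply IH; [intros; apply H|]; lia).
    assert (0 <= f n) by (apply H; lia). lra.
Qed.

Lemma sumR_swap r n F :
  sumR r (fun j => sumR n (F j)) = sumR n (fun i => sumR r (fun j => F j i)).
Proof.
  induction r as [|r IH]; simpl; [symmetry; apply sumR_zero|].
  rewrite IH, <- sumR_plus; reflexivity.
Qed.

Lemma sumR_indicator r k c :
  (k < r)%nat -> sumR r (fun j => if Nat.eqb k j then c else 0) = c.
Proof.
  induction r as [|r IH]; simpl; intros H; [lia|].
  destruct (Nat.eqb_spec k r) as [->|Hne].
  - rewrite (sumR_ext _ _ (fun _ => 0)), sumR_zero; [ring|].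
    intros i Hi. destruct (Nat.eqb_spec r i); [lia|reflexivity].
  - rewrite IH by lia. ring.
Qed.

Definition sumR_on (r : nat) (K : nat -> bool) (f : nat -> R) : R :=
  sumR r (fun j => if K j then f j else 0).

Lemma sumR_on_nonneg r K f : (forall j, (j < r)%nat -> 0 <= f j) -> 0 <= sumR_on r K f.
Proof. intros H. apply sumR_nonneg; intros j Hj. destruct (K j); [apply H; auto|lra]. Qed.

Lemma sumR_on_subset r K L f :
  (forall j, (j < r)%nat -> 0 <= f j) ->
  (forall j, (j < r)%nat -> K j = true -> L j = true) ->
  sumR_on r K f <= sumR_on r L f.
Proof.
  intros Hf HKL. apply sumR_le; intros j Hj.
  destruct (K j) eqn:EK; [rewrite (HKL j Hj EK); lra|].
  destruct (L j); [apply Hf; exact Hj|lra].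
Qed.

Lemma sumR_on_split r K f : sumR_on r K f + sumR_on r (fun j => negb (K j)) f = sumR r f.
Proof.
  unfold sumR_on. rewrite <- sumR_plus. apply sumR_ext; intros j _.
  destruct (K j); simpl; ring.
Qed.

Lemma sumR_on_scal r K c f : sumR_on r K (fun j => c * f j) = c * sumR_on r K f.
Proof.
  unfold sumR_on. rewrite <- sumR_scal. apply sumR_ext; intros j _.
  destruct (K j); ring.
Qed.

Lemma cardP_S r J : cardP (S r) J = (cardP r J + if J r then 1 else 0)%nat.
Proof.
  unfold cardP. rewrite seq_S, filter_app, length_app. simpl.
  destruct (J r); simpl; lia.
Qed.

Lemma sumR_on_const r K c : sumR_on r K (fun _ => c) = INR (cardP r K) * c.
Proof.
  unfold sumR_on. induction r as [|r IH]; simpl; [unfold cardP; simpl; lra|].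
  rewrite IH, cardP_S, plus_INR. destruct (K r); simpl; ring.
Qed.

Lemma sumR_on_cauchy_schwarz r K u :
  sumR_on r K u ^ 2 <= INR (cardP r K) * sumR_on r K (fun j => u j ^ 2).
Proof.
  unfold sumR_on. induction r as [|r IH]; [unfold cardP; simpl; lra|].
  cbn [sumR]. rewrite cardP_S, plus_INR.
  set (s := sumR r (fun j => if K j then u j else 0)) in *.
  set (Q := sumR r (fun j => if K j then u j ^ 2 else 0)) in *.
  set (k := INR (cardP r K)) in *.
  assert (Hk : 0 <= k) by apply pos_INR.
  assert (HQ : 0 <= Q) by (apply sumR_nonneg; intros j _; destruct (K j); [apply pow2_ge_0|lra]).
  destruct (K r); simpl INR; [|nra].
  destruct Hk as [Hk|Hk].
  - assert (2 * s * u r * k <= (Q + k * u r ^ 2) * k)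
      by (pose proof (pow2_ge_0 (s - k * u r)); nra).
    apply Rmult_le_reg_r in H; [nra|exact Hk].
  - rewrite <- Hk in IH. assert (s = 0) by nra. subst k. rewrite H, <- Hk. nra.
Qed.

Lemma rpow_nonneg a y : 0 <= rpow a y.
Proof. unfold rpow; destruct (Rlt_dec 0 a); [left; apply exp_pos|lra]. Qed.

Lemma rpow_0 y : rpow 0 y = 0.
Proof. unfold rpow; destruct (Rlt_dec 0 0); [lra|reflexivity]. Qed.

Lemma rpow_pos a y : 0 < a -> rpow a y = Rpower a y.
Proof. unfold rpow; destruct (Rlt_dec 0 a); [reflexivity|lra]. Qed.

Lemma rpow_gt0 a y : 0 < a -> 0 < rpow a y.
Proof. intros Ha. rewrite rpow_pos by exact Ha. apply exp_pos. Qed.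

Lemma rpow_eq0 a y : 0 <= a -> rpow a y = 0 -> a = 0.
Proof. intros [Ha|Ha] H; [|auto]. pose proof (rpow_gt0 a y Ha). lra. Qed.

Lemma rpow_rpow_inv p a : 0 < p -> 0 <= a -> rpow (rpow a p) (1 / p) = a.
Proof.
  intros Hp [Ha|<-]; [|rewrite !rpow_0; reflexivity].
  rewrite (rpow_pos a), rpow_pos, Rpower_mult by (auto; apply exp_pos).
  replace (p * (1 / p)) with 1 by (field; lra). apply Rpower_1; exact Ha.
Qed.

Lemma rpow_inv_rpow p a : 0 < p -> 0 <= a -> rpow (rpow a (1 / p)) p = a.
Proof.
  intros Hp [Ha|<-]; [|rewrite !rpow_0; reflexivity].
  rewrite (rpow_pos a), rpow_pos, Rpower_mult by (auto; apply exp_pos).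
  replace (1 / p * p) with 1 by (field; lra). apply Rpower_1; exact Ha.
Qed.

Lemma rpow_mult a b y : 0 <= a -> 0 <= b -> rpow (a * b) y = rpow a y * rpow b y.
Proof.
  intros [Ha|<-] [Hb|<-]; rewrite ?Rmult_0_l, ?Rmult_0_r, ?rpow_0; try ring.
  rewrite !rpow_pos by (auto; nra). symmetry; apply Rpower_mult_distr; auto.
Qed.

Lemma rpow_le_compat a b y : 0 < y -> 0 <= a <= b -> rpow a y <= rpow b y.
Proof.
  intros Hy [[Ha|<-] Hab]; [|rewrite rpow_0; apply rpow_nonneg].
  rewrite !rpow_pos by lra. apply Rle_Rpower_l; lra.
Qed.

Lemma rpow_lt_compat a b y : 0 < y -> 0 <= a < b -> rpow a y < rpow b y.
Proof.
  intros Hy [[Ha|<-] Hab]; [|rewrite rpow_0; apply rpow_gt0; lra].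
  rewrite !rpow_pos by lra. apply Rlt_Rpower_l; lra.
Qed.

Lemma rpow_le_reg a b y : 0 < y -> 0 <= b -> rpow a y <= rpow b y -> a <= b.
Proof.
  intros Hy Hb H. destruct (Rle_dec a b) as [|Hba]; [assumption|].
  pose proof (rpow_lt_compat b a y Hy ltac:(lra)). lra.
Qed.

Lemma rpow_1 a : 0 <= a -> rpow a 1 = a.
Proof. intros [Ha|<-]; [rewrite rpow_pos by exact Ha; apply Rpower_1, Ha|apply rpow_0]. Qed.

Lemma rpow_2 a : 0 <= a -> rpow a 2 = a ^ 2.
Proof.
  intros [Ha|<-]; [|rewrite rpow_0; simpl; ring].
  rewrite rpow_pos by exact Ha. replace 2 with (INR 2) by (simpl; lra).
  apply Rpower_pow, Ha.
Qed.

Lemma rpow_half a : 0 <= a -> rpow a (1 / 2) = sqrt a.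
Proof.
  intros [Ha|<-]; [|rewrite rpow_0, sqrt_0; reflexivity].
  rewrite rpow_pos by exact Ha. replace (1 / 2) with (/ 2) by field.
  apply Rpower_sqrt, Ha.
Qed.

Lemma ln_le_sub_1 a : 0 < a -> ln a <= a - 1.
Proof. intros Ha. pose proof (exp_ineq1_le (ln a)) as H. rewrite exp_ln in H by exact Ha. lra. Qed.

Lemma exp_le_compat x y : x <= y -> exp x <= exp y.
Proof. intros [H|<-]; [left; apply exp_increasing, H|lra]. Qed.

Lemma ln_le_reg x y : 0 < x -> 0 < y -> ln x <= ln y -> x <= y.
Proof. intros Hx Hy [H|H]; [left; apply ln_lt_inv|right; apply ln_inv]; auto. Qed.

Lemma sq_le_rpow a p : 0 <= a <= 1 -> p <= 2 -> a ^ 2 <= rpow a p.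
Proof.
  intros [[Ha|<-] Ha1] Hp; [|rewrite rpow_0; simpl; lra].
  rewrite rpow_pos, <- (Rpower_pow 2 a Ha) by exact Ha. unfold Rpower. simpl INR.
  pose proof (ln_le_sub_1 a Ha). apply exp_le_compat. nra.
Qed.

Lemma ln_concave u v l : 0 < u -> 0 < v -> 0 <= l <= 1 ->
  l * ln u + (1 - l) * ln v <= ln (l * u + (1 - l) * v).
Proof.
  intros Hu Hv Hl. set (w := l * u + (1 - l) * v).
  assert (Hw : 0 < w) by (unfold w; nra).
  (* ln(u/w) <= u/w - 1 and ln(v/w) <= v/w - 1, and the right-hand sides average to 0 *)
  pose proof (ln_le_sub_1 (u / w) ltac:(apply Rdiv_lt_0_compat; lra)) as Hu'.
  pose proof (ln_le_sub_1 (v / w) ltac:(apply Rdiv_lt_0_compat; lra)) as Hv'.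
  unfold Rdiv in Hu', Hv'. rewrite ln_mult, ln_Rinv in Hu', Hv' by (auto; apply Rinv_0_lt_compat; lra).
  assert (E : l * (u * / w - 1) + (1 - l) * (v * / w - 1) = 0) by (unfold w in *; field; lra).
  nra.
Qed.

Lemma rpow_bernoulli t p : 0 <= t -> 1 <= p -> 1 + p * (t - 1) <= rpow t p.
Proof.
  intros [Ht|<-] Hp; [|rewrite rpow_0; nra].
  set (s := rpow t p). assert (Hs : 0 < s) by (apply rpow_gt0, Ht).
  assert (Hls : ln s = p * ln t) by (unfold s; rewrite rpow_pos by exact Ht; apply ln_Rpower).
  (* weighted AM-GM: t = s^(1/p) * 1^(1-1/p) <= s/p + (1 - 1/p) *)
  assert (Hip : 0 <= 1 / p <= 1).
  { unfold Rdiv; rewrite Rmult_1_l. split; [left; apply Rinv_0_lt_compat; lra|].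
    rewrite <- Rinv_1. apply Rinv_le_contravar; lra. }
  pose proof (ln_concave s 1 (1 / p) Hs Rlt_0_1 Hip) as H.
  rewrite ln_1, Hls in H.
  replace (1 / p * (p * ln t) + (1 - 1 / p) * 0) with (ln t) in H by (field; lra).
  apply ln_le_reg in H; [|exact Ht|nra].
  apply Rmult_le_compat_l with (r := p) in H; [|lra].
  replace (p * (1 / p * s + (1 - 1 / p) * 1)) with (s + p - 1) in H by (field; lra).
  lra.
Qed.

Lemma rpow_tangent w z p : 0 <= w -> 0 < z -> 1 <= p ->
  rpow z p * (1 + p * (w / z - 1)) <= rpow w p.
Proof.
  intros Hw Hz Hp. assert (Hwz : 0 <= w / z) by (apply Rdiv_le_0_compat; lra).
  replace w with (z * (w / z)) at 2 by (field; lra).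
  rewrite rpow_mult by lra.
  apply Rmult_le_compat_l; [apply rpow_nonneg|apply rpow_bernoulli; assumption].
Qed.

Lemma rpow_convex x y l p : 0 <= x -> 0 <= y -> 0 <= l <= 1 -> 1 <= p ->
  rpow (l * x + (1 - l) * y) p <= l * rpow x p + (1 - l) * rpow y p.
Proof.
  intros Hx Hy Hl Hp. set (z := l * x + (1 - l) * y).
  assert (Hz : 0 <= z) by (unfold z; nra).
  destruct Hz as [Hz|Hz].
  - pose proof (rpow_tangent x z p Hx Hz Hp) as Tx.
    pose proof (rpow_tangent y z p Hy Hz Hp) as Ty.
    assert (E : l * (1 + p * (x / z - 1)) + (1 - l) * (1 + p * (y / z - 1)) = 1)
      by (unfold z in *; field; lra).
    apply Rmult_le_compat_l with (r := l) in Tx; [|lra].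
    apply Rmult_le_compat_l with (r := 1 - l) in Ty; [|lra].
    replace (rpow z p) with
      (rpow z p * (l * (1 + p * (x / z - 1)) + (1 - l) * (1 + p * (y / z - 1))))
      by (rewrite E; ring).
    lra.
  - rewrite <- Hz, rpow_0. pose proof (rpow_nonneg x p). pose proof (rpow_nonneg y p). nra.
Qed.

Definition pnorm (p : R) (n : nat) (v : nat -> R) : R :=
  rpow (sumR n (fun i => rpow (Rabs (v i)) p)) (1 / p).

Lemma pnorm_nonneg p n v : 0 <= pnorm p n v.
Proof. apply rpow_nonneg. Qed.

Lemma sumR_rpow_abs_nonneg p n v : 0 <= sumR n (fun i => rpow (Rabs (v i)) p).
Proof. apply sumR_nonneg; intros; apply rpow_nonneg. Qed.

Lemma rpow_pnorm p n v : 0 < p -> rpow (pnorm p n v) p = sumR n (fun i => rpow (Rabs (v i)) p).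
Proof. intros Hp. apply rpow_inv_rpow, sumR_rpow_abs_nonneg; exact Hp. Qed.

Lemma pnorm_ext p n v w :
  (forall i, (i < n)%nat -> Rabs (v i) = Rabs (w i)) -> pnorm p n v = pnorm p n w.
Proof. intros H. unfold pnorm. f_equal. apply sumR_ext; intros i Hi. rewrite H; auto. Qed.

Lemma pnorm_eq0 p n v : 0 < p -> pnorm p n v = 0 -> forall i, (i < n)%nat -> v i = 0.
Proof.
  intros Hp H i Hi. apply rpow_eq0 in H; [|apply sumR_rpow_abs_nonneg].
  pose proof (sumR_term_le n (fun i => rpow (Rabs (v i)) p) i
                (fun i _ => rpow_nonneg _ _) Hi) as Hle.
  pose proof (rpow_nonneg (Rabs (v i)) p).
  destruct (Req_dec (v i) 0) as [|Hne]; [assumption|exfalso].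
  apply (Rabs_no_R0 _ Hne), (rpow_eq0 _ p); [apply Rabs_pos|]. simpl in Hle. lra.
Qed.

Lemma pnorm_0 p n : pnorm p n (fun _ => 0) = 0.
Proof.
  unfold pnorm. rewrite (sumR_ext _ _ (fun _ => 0)), sumR_zero, rpow_0; [reflexivity|].
  intros i _. rewrite Rabs_R0. apply rpow_0.
Qed.

Lemma pnorm_triangle p n u v : 1 <= p ->
  pnorm p n (fun i => u i + v i) <= pnorm p n u + pnorm p n v.
Proof.
  intros Hp.
  destruct (pnorm_nonneg p n u) as [Ha|Ha].
  2:{ rewrite <- Ha, Rplus_0_l. right. apply pnorm_ext. intros i Hi.
      rewrite (pnorm_eq0 p n u ltac:(lra) (eq_sym Ha) i Hi), Rplus_0_l. reflexivity. }
  destruct (pnorm_nonneg p n v) as [Hb|Hb].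
  2:{ rewrite <- Hb, Rplus_0_r. right. apply pnorm_ext. intros i Hi.
      rewrite (pnorm_eq0 p n v ltac:(lra) (eq_sym Hb) i Hi), Rplus_0_r. reflexivity. }
  set (a := pnorm p n u) in *. set (b := pnorm p n v) in *.
  set (c := a + b). set (l := a / c).
  assert (Hc : 0 < c) by (unfold c; lra).
  assert (Hl : 0 <= l <= 1) by (unfold l; split; [apply Rdiv_le_0_compat|apply Rdiv_le_1]; unfold c; lra).
  (* |u_i + v_i| <= l (c/a |u_i|) + (1 - l) (c/b |v_i|), then convexity of t^p and
     summation give sum |u_i + v_i|^p <= l c^p + (1 - l) c^p = c^p *)
  assert (Hsum : sumR n (fun i => rpow (Rabs (u i + v i)) p) <= rpow c p).
  { apply Rle_trans with
      (sumR n (fun i => l * (rpow (c / a) p * rpow (Rabs (u i)) p)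
                        + (1 - l) * (rpow (c / b) p * rpow (Rabs (v i)) p))).
    - apply sumR_le. intros i Hi.
      assert (Hcomb : Rabs (u i) + Rabs (v i)
                      = l * (c / a * Rabs (u i)) + (1 - l) * (c / b * Rabs (v i)))
        by (unfold l, c; field; lra).
      apply Rle_trans with (rpow (Rabs (u i) + Rabs (v i)) p).
      + apply rpow_le_compat; [lra|split; [apply Rabs_pos|apply Rabs_triang]].
      + rewrite Hcomb, <- !rpow_mult by (try apply Rabs_pos; apply Rdiv_le_0_compat; lra).
        apply rpow_convex; auto; apply Rmult_le_pos; try apply Rabs_pos; apply Rdiv_le_0_compat; lra.
    - rewrite sumR_plus, !sumR_scal, <- (rpow_pnorm p n u), <- (rpow_pnorm p n v) by lra.
      fold a b. rewrite <- !rpow_mult by (lra || (apply Rdiv_le_0_compat; lra)).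
      replace (c / a * a) with c by (field; lra). replace (c / b * b) with c by (field; lra).
      lra. }
  unfold pnorm at 1. rewrite <- (rpow_rpow_inv p c) by lra.
  apply rpow_le_compat; [apply Rdiv_lt_0_compat; lra|split; [apply sumR_rpow_abs_nonneg|exact Hsum]].
Qed.

Lemma sumR_sq_le_pnorm_sq p n v : 1 <= p <= 2 -> sumR n (fun i => v i ^ 2) <= pnorm p n v ^ 2.
Proof.
  intros Hp. set (N := pnorm p n v).
  destruct (pnorm_nonneg p n v) as [HN|HN].
  2:{ fold N in HN. rewrite <- HN, (sumR_ext _ _ (fun _ => 0)), sumR_zero; [simpl; lra|].
      intros i Hi. rewrite (pnorm_eq0 p n v) by (auto; lra). simpl; ring. }
  fold N in HN. set (K := rpow N p). assert (HK : 0 < K) by (apply rpow_gt0, HN).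
  assert (HKs : K = sumR n (fun i => rpow (Rabs (v i)) p)) by (apply rpow_pnorm; lra).
  (* each |v_i| / N lies in [0, 1], where t^2 <= t^p; summing gives the claim *)
  apply Rle_trans with (sumR n (fun i => N ^ 2 * (/ K * rpow (Rabs (v i)) p))).
  - apply sumR_le; intros i Hi. set (a := Rabs (v i) / N).
    assert (Hvi : Rabs (v i) <= N).
    { apply rpow_le_reg with p; [lra|lra|]. fold K. rewrite HKs.
      apply (sumR_term_le n (fun i => rpow (Rabs (v i)) p)); [intros; apply rpow_nonneg|exact Hi]. }
    assert (Ha : 0 <= a <= 1) by (unfold a; split; [apply Rdiv_le_0_compat|apply Rdiv_le_1]; pose proof (Rabs_pos (v i)); lra).
    assert (Hr : / K * rpow (Rabs (v i)) p = rpow a p).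
    { replace (Rabs (v i)) with (N * a) by (unfold a; field; lra).
      rewrite rpow_mult by lra. fold K. field; lra. }
    replace (v i ^ 2) with (N ^ 2 * a ^ 2) by (unfold a; rewrite <- (pow2_abs (v i)); field; lra).
    rewrite Hr. apply Rmult_le_compat_l; [nra|apply sq_le_rpow; lra].
  - rewrite sumR_scal, sumR_scal, <- HKs. replace (/ K * K) with 1 by (field; lra). lra.
Qed.

Definition mask (g : nat -> nat) (j : nat) (x : nat -> R) (i : nat) : R :=
  if Nat.eqb (g i) j then x i else 0.

Lemma gnorm_pnorm p n g x j : gnorm p n g x j = pnorm p n (mask g j x).
Proof.
  unfold gnorm, pnorm, mask. f_equal. apply sumR_ext; intros i _.
  destruct (Nat.eqb (g i) j); [reflexivity|rewrite Rabs_R0, rpow_0; reflexivity].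
Qed.

Lemma gnorm_nonneg p n g x j : 0 <= gnorm p n g x j.
Proof. apply rpow_nonneg. Qed.

Lemma gnorm_ext p n g x y j :
  (forall i, (i < n)%nat -> g i = j -> Rabs (x i) = Rabs (y i)) -> gnorm p n g x j = gnorm p n g y j.
Proof.
  intros H. rewrite !gnorm_pnorm. apply pnorm_ext; intros i Hi. unfold mask.
  destruct (Nat.eqb_spec (g i) j); [apply H|]; auto.
Qed.

Lemma gnorm_eq0 p n g x j : (forall i, (i < n)%nat -> g i = j -> x i = 0) -> gnorm p n g x j = 0.
Proof.
  intros H. rewrite (gnorm_ext p n g x (fun _ => 0)), gnorm_pnorm.
  - transitivity (pnorm p n (fun _ => 0)); [|apply pnorm_0]. apply pnorm_ext; intros i _. unfold mask. now destruct (Nat.eqb (g i) j).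
  - intros i Hi Hg. rewrite H; auto.
Qed.

Lemma gnorm_sub_le p n g x y j : 1 <= p ->
  gnorm p n g y j - gnorm p n g x j <= gnorm p n g (fun i => x i - y i) j.
Proof.
  intros Hp. rewrite !gnorm_pnorm.
  rewrite (pnorm_ext p n (mask g j y) (fun i => mask g j x i + mask g j (fun i => y i - x i) i)).
  - rewrite (pnorm_ext p n (mask g j (fun i => x i - y i)) (mask g j (fun i => y i - x i))).
    + pose proof (pnorm_triangle p n (mask g j x) (mask g j (fun i => y i - x i)) Hp). lra.
    + intros i _. unfold mask. destruct (Nat.eqb (g i) j); [apply Rabs_minus_sym|reflexivity].
  - intros i _. unfold mask. destruct (Nat.eqb (g i) j); f_equal; ring.
Qed.

Lemma mnorm_1 p n r g x K : mnorm p 1 n r g x K = sumR_on r K (gnorm p n g x).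
Proof.
  unfold mnorm. replace (1 / 1) with 1 by field.
  rewrite (rpow_1 (sumR _ _)) by (apply sumR_nonneg; intros j _; destruct (K j); [apply rpow_nonneg|lra]).
  apply sumR_ext; intros j _. destruct (K j); [apply rpow_1, gnorm_nonneg|reflexivity].
Qed.

Lemma mnorm_2 p n r g x K :
  mnorm p 2 n r g x K = sqrt (sumR_on r K (fun j => gnorm p n g x j ^ 2)).
Proof.
  unfold mnorm.
  rewrite (rpow_half (sumR _ _)) by (apply sumR_nonneg; intros j _; destruct (K j); [apply rpow_nonneg|lra]).
  f_equal. apply sumR_ext; intros j _. destruct (K j); [apply rpow_2, gnorm_nonneg|reflexivity].
Qed.

Lemma mnorm_2_sq p n r g x K :
  mnorm p 2 n r g x K ^ 2 = sumR_on r K (fun j => gnorm p n g x j ^ 2).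
Proof. rewrite mnorm_2. apply pow2_sqrt, sumR_on_nonneg; intros; apply pow2_ge_0. Qed.

Lemma fnorm_1 p n r g x : fnorm p 1 n r g x = sumR r (gnorm p n g x).
Proof. unfold fnorm. rewrite mnorm_1. reflexivity. Qed.

Lemma sumR_sq_le_group_norms p n r g x : is_group_partition n r g -> 1 <= p <= 2 ->
  sumR n (fun i => x i ^ 2) <= sumR r (fun j => gnorm p n g x j ^ 2).
Proof.
  intros [Hg _] Hp.
  rewrite (sumR_ext n _ (fun i => sumR r (fun j => mask g j x i ^ 2))), <- sumR_swap.
  - apply sumR_le; intros j _. rewrite gnorm_pnorm. apply sumR_sq_le_pnorm_sq, Hp.
  - intros i Hi. rewrite <- (sumR_indicator r (g i) (x i ^ 2)) by auto.
    apply sumR_ext; intros j _. unfold mask. destruct (Nat.eqb (g i) j); simpl; ring.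
Qed.

Lemma cardP_false r : cardP r (fun _ => false) = 0%nat.
Proof. induction r as [|r IH]; [reflexivity|]. rewrite cardP_S, IH. reflexivity. Qed.

Lemma cardP_lt_subset r (T K : nat -> bool) k :
  (forall j, (j < r)%nat -> T j = true -> K j = true) ->
  (k < r)%nat -> K k = true -> T k = false -> (cardP r T < cardP r K)%nat.
Proof.
  revert k. induction r as [|r IH]; intros k HTK Hk HKk HTk; [lia|].
  rewrite !cardP_S.
  assert (Hle : forall r', (r' <= r)%nat -> (cardP r' T <= cardP r' K)%nat).
  { induction r' as [|r' IH']; intros Hr'; [reflexivity|]. rewrite !cardP_S.
    specialize (IH' ltac:(lia)). specialize (HTK r' ltac:(lia)).
    destruct (T r'), (K r'); first [lia|discriminate (HTK eq_refl)]. }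
  destruct (Nat.eq_dec k r) as [->|Hne].
  - rewrite HKk, HTk. specialize (Hle r (le_n r)). lia.
  - specialize (IH k (fun j Hj => HTK j ltac:(lia)) ltac:(lia) HKk HTk).
    specialize (HTK r ltac:(lia)). destruct (T r), (K r); first [lia|discriminate (HTK eq_refl)].
Qed.

Lemma cardP_exists_diff r (T K : nat -> bool) :
  (cardP r T < cardP r K)%nat -> exists k, (k < r)%nat /\ K k = true /\ T k = false.
Proof.
  induction r as [|r IH]; intros H; [cbv in H; lia|]. rewrite !cardP_S in H.
  destruct (K r) eqn:EK, (T r) eqn:ET; try (exists r; auto; fail);
    destruct IH as [k [Hk HkP]]; try lia; exists k; split; (lia || exact HkP).
Qed.

Lemma cardP_add r T k : (k < r)%nat -> T k = false ->
  cardP r (fun j => T j || Nat.eqb j k) = S (cardP r T).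
Proof.
  induction r as [|r IH]; intros Hk HT; [lia|]. rewrite !cardP_S.
  destruct (Nat.eqb_spec r k) as [->|Hne].
  - rewrite HT, orb_true_r. f_equal.
    replace (cardP k (fun j => T j || Nat.eqb j k)) with (cardP k T); [lia|].
    clear. unfold cardP. f_equal. apply filter_ext_in. intros j Hj.
    apply in_seq in Hj. destruct (Nat.eqb_spec j k); [lia|]. now rewrite orb_false_r.
  - rewrite IH, orb_false_r by (auto; lia). lia.
Qed.

Lemma exists_argmax r (P : nat -> bool) (f : nat -> R) :
  (exists k, (k < r)%nat /\ P k = true) ->
  exists k, (k < r)%nat /\ P k = true /\
    forall k', (k' < r)%nat -> P k' = true -> f k' <= f k.
Proof.
  induction r as [|r IH]; intros [k [Hk HPk]]; [lia|].
  destruct (classic (exists k, (k < r)%nat /\ P k = true)) as [Hex|Hnone].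
  - destruct (IH Hex) as [m [Hm [HPm Hmax]]].
    destruct (P r) eqn:EPr; [destruct (Rle_dec (f r) (f m)) as [Hrm|Hrm]|].
    + exists m. repeat split; [lia|exact HPm|]. intros k' Hk' HP'.
      destruct (Nat.eq_dec k' r) as [->|]; [exact Hrm|apply Hmax; auto; lia].
    + exists r. repeat split; [lia|exact EPr|]. intros k' Hk' HP'.
      destruct (Nat.eq_dec k' r) as [->|]; [lra|].
      pose proof (Hmax k' ltac:(lia) HP'). lra.
    + exists m. repeat split; [lia|exact HPm|]. intros k' Hk' HP'.
      destruct (Nat.eq_dec k' r) as [->|]; [congruence|apply Hmax; auto; lia].
  - exists r. assert (k = r) as ->.
    { destruct (Nat.eq_dec k r); [assumption|]. exfalso; apply Hnone; exists k; split; [lia|exact HPk]. }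
    repeat split; [lia|exact HPk|]. intros k' Hk' HP'.
    destruct (Nat.eq_dec k' r) as [->|]; [lra|].
    exfalso; apply Hnone; exists k'; split; [lia|exact HP'].
Qed.

(* Greedy selection: add one maximal group of J^c \ T at a time. *)
Lemma top_groups_exist p n r g x J N : exists T, top_groups p n r g x J N T.
Proof.
  induction N as [|N [T [HTJ [HcT Hmax]]]].
  - exists (fun _ => false). repeat split; try discriminate. rewrite cardP_false. lia.
  - set (Jc := fun j => negb (J j)) in *.
    destruct (Nat.le_gt_cases (cardP r Jc) N) as [Hfew|Hmany].
    { exists T. repeat split; auto. unfold Jc in *. lia. }
    destruct (exists_argmax r (fun j => Jc j && negb (T j)) (gnorm p n g x)) as [k [Hk [Pk Hkmax]]].
    { destruct (cardP_exists_diff r T Jc ltac:(lia)) as [k [Hk [HJk HTk]]].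
      exists k. split; [exact Hk|]. now rewrite HJk, HTk. }
    apply andb_prop in Pk as [HJk HTk]. apply negb_true_iff in HJk, HTk.
    exists (fun j => T j || Nat.eqb j k). repeat split.
    + intros j Hj HTj. apply orb_prop in HTj as [HTj|HTj]; [auto|].
      apply Nat.eqb_eq in HTj as ->. exact HJk.
    + rewrite cardP_add by assumption. unfold Jc in *. lia.
    + intros j k' Hj Hk' HTj HJk' HTk'. apply orb_false_elim in HTk' as [HTk' _].
      apply orb_prop in HTj as [HTj|HTj]; [apply Hmax; auto|].
      apply Nat.eqb_eq in HTj as ->. apply Hkmax; [exact Hk'|]. unfold Jc. now rewrite HJk', HTk'.
Qed.

Lemma top_groups_tail_le p n r g x J N T k :
  top_groups p n r g x J N T -> (k < r)%nat -> J k = false -> T k = false ->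
  INR N * gnorm p n g x k <= sumR_on r (fun j => negb (J j)) (gnorm p n g x).
Proof.
  intros [HTJ [HcT Hmax]] Hk HJk HTk.
  assert (HcTN : cardP r T = N).
  { assert (Hlt : (cardP r T < cardP r (fun j => negb (J j)))%nat).
    { apply (cardP_lt_subset r T _ k); [|exact Hk|now rewrite HJk|exact HTk].
      intros j Hj HTj. now rewrite HTJ. }
    lia. }
  rewrite <- HcTN, <- sumR_on_const.
  apply Rle_trans with (sumR_on r T (gnorm p n g x)).
  - apply sumR_le; intros j Hj. destruct (T j) eqn:ETj; [apply Hmax|]; auto; lra.
  - apply sumR_on_subset; [intros; apply gnorm_nonneg|]. intros j Hj HTj. now rewrite HTJ.
Qed.

Lemma mnorm_1_nonneg p n r g x K : 0 <= mnorm p 1 n r g x K.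
Proof. apply rpow_nonneg. Qed.

Lemma mnorm_2_nonneg p n r g x K : 0 <= mnorm p 2 n r g x K.
Proof. apply rpow_nonneg. Qed.

Lemma mnorm_2_subset p n r g x K L :
  (forall j, (j < r)%nat -> K j = true -> L j = true) ->
  mnorm p 2 n r g x K <= mnorm p 2 n r g x L.
Proof.
  intros HKL. rewrite !mnorm_2. apply sqrt_le_1_alt, sumR_on_subset; [|exact HKL].
  intros; apply pow2_ge_0.
Qed.

Lemma mnorm_1_le_sqrt_card p n r g x K :
  mnorm p 1 n r g x K <= sqrt (INR (cardP r K)) * mnorm p 2 n r g x K.
Proof.
  rewrite mnorm_1, mnorm_2, <- sqrt_mult_alt by apply pos_INR.
  rewrite <- (sqrt_pow2 (sumR_on r K (gnorm p n g x)))
    by (apply sumR_on_nonneg; intros; apply gnorm_nonneg).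
  apply sqrt_le_1_alt, sumR_on_cauchy_schwarz.
Qed.

Lemma mnorm_2_sq_split p n r g x K :
  sumR r (fun j => gnorm p n g x j ^ 2)
  = mnorm p 2 n r g x K ^ 2 + mnorm p 2 n r g x (fun j => negb (K j)) ^ 2.
Proof. rewrite !mnorm_2_sq. symmetry. apply sumR_on_split. Qed.

Lemma mnorm_vec0 p q n r g x K :
  (forall i, (i < n)%nat -> x i = 0) -> mnorm p q n r g x K = 0.
Proof.
  intros Hx. unfold mnorm. rewrite (sumR_ext _ _ (fun _ => 0)), sumR_zero, rpow_0; [reflexivity|].
  intros j _. destruct (K j); [|reflexivity].
  rewrite gnorm_eq0 by (intros i Hi _; apply Hx, Hi). apply rpow_0.
Qed.

Lemma is_phi_mul_le p q m n r g A S N phi x J T :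
  is_phi p q m n r g A S N phi -> (cardP r J <= S)%nat ->
  mnorm p q n r g x (fun j => negb (J j)) <= mnorm p q n r g x J ->
  top_groups p n r g x J N T ->
  phi * mnorm p 2 n r g x (fun j => T j || J j) <= sqrt (sqnorm2 m (matvec n A x)).
Proof.
  intros [Hlow _] HcJ Hcone HT.
  set (M := mnorm p 2 n r g x (fun j => T j || J j)).
  destruct (classic (nonzero_vec n x)) as [Hx|Hx].
  - destruct (mnorm_2_nonneg p n r g x (fun j => T j || J j)) as [HM|HM]; fold M in HM.
    + assert (Hphi : phi <= sqrt (sqnorm2 m (matvec n A x)) / M)
        by (apply Hlow; exists x, J, T; auto).
      apply Rmult_le_compat_r with (r := M) in Hphi; [|lra].
      replace (sqrt (sqnorm2 m (matvec n A x)) / M * M) with (sqrt (sqnorm2 m (matvec n A x)))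
        in Hphi by (field; lra).
      exact Hphi.
    + rewrite <- HM, Rmult_0_r. apply sqrt_pos.
  - assert (HM : M = 0).
    { apply mnorm_vec0. intros i Hi. apply NNPP. intros Hne. apply Hx. exists i; auto. }
    rewrite HM, Rmult_0_r. apply sqrt_pos.
Qed.

(* The tail groups are each no larger than the average of the S top groups of J^c,
   whose sum is dominated by the head J thanks to the cone condition. *)
Lemma mnorm_2_tail_le p n r g x J T :
  (0 < cardP r J)%nat -> top_groups p n r g x J (cardP r J) T ->
  mnorm p 1 n r g x (fun j => negb (J j)) <= mnorm p 1 n r g x J ->
  mnorm p 2 n r g x (fun j => negb (T j || J j)) <= mnorm p 2 n r g x J.
Proof.
  intros HcJ HT Hcone. rewrite !mnorm_1 in Hcone.
  set (gn := gnorm p n g x) in *. set (c := INR (cardP r J)).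
  set (a := sumR_on r J gn) in *. set (b := sumR_on r (fun j => negb (J j)) gn) in *.
  assert (Hc : 0 < c) by (apply lt_0_INR, HcJ).
  assert (Hb : 0 <= b) by (apply sumR_on_nonneg; intros; apply gnorm_nonneg).
  assert (Htail : forall j, (j < r)%nat -> negb (T j || J j) = true -> gn j <= b / c).
  { intros j Hj Htj. apply negb_true_iff, orb_false_elim in Htj as [HTj HJj].
    pose proof (top_groups_tail_le p n r g x J (cardP r J) T j HT Hj HJj HTj) as H.
    apply Rmult_le_reg_l with c; [exact Hc|]. fold gn c b in H. field_simplify; lra. }
  assert (Hsq : sumR_on r (fun j => negb (T j || J j)) (fun j => gn j ^ 2) <= b / c * b).
  { apply Rle_trans with (sumR_on r (fun j => negb (T j || J j)) (fun j => b / c * gn j)).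
    - apply sumR_le; intros j Hj. destruct (negb (T j || J j)) eqn:E; [|lra].
      pose proof (Htail j Hj E). assert (0 <= gn j) by apply gnorm_nonneg. simpl. nra.
    - rewrite sumR_on_scal. apply Rmult_le_compat_l; [apply Rdiv_le_0_compat; lra|].
      apply sumR_on_subset; [intros; apply gnorm_nonneg|].
      intros j _ Hj. apply negb_true_iff, orb_false_elim in Hj as [_ ->]. reflexivity. }
  assert (HCS : a ^ 2 <= c * sumR_on r J (fun j => gn j ^ 2)) by apply sumR_on_cauchy_schwarz.
  rewrite !mnorm_2. apply sqrt_le_1_alt. fold gn.
  apply Rle_trans with (b / c * b); [exact Hsq|].
  apply Rmult_le_reg_l with c; [exact Hc|].
  replace (c * (b / c * b)) with (b ^ 2) by (field; lra). nra.
Qed.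

Lemma matvec_sub n A x y k :
  matvec n A (fun i => x i - y i) k = matvec n A x k - matvec n A y k.
Proof. unfold matvec. rewrite <- sumR_minus. apply sumR_ext; intros; ring. Qed.

Lemma fnorm_1_sub_le p n r g x y J : 1 <= p ->
  (forall j, (j < r)%nat -> J j = false -> forall i, (i < n)%nat -> g i = j -> y i = 0) ->
  fnorm p 1 n r g y - fnorm p 1 n r g x
  <= mnorm p 1 n r g (fun i => x i - y i) J
     - mnorm p 1 n r g (fun i => x i - y i) (fun j => negb (J j)).
Proof.
  intros Hp Hy. rewrite !fnorm_1, !mnorm_1. unfold sumR_on. rewrite <- !sumR_minus.
  apply sumR_le; intros j Hj. destruct (J j) eqn:EJ; simpl.
  - pose proof (gnorm_sub_le p n g x y j Hp). lra.
  - rewrite (gnorm_eq0 p n g y j) by (intros i Hi Hg; exact (Hy j Hj EJ i Hi Hg)).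
    rewrite (gnorm_ext p n g (fun i => x i - y i) x j); [lra|].
    intros i Hi Hg. rewrite (Hy j Hj EJ i Hi Hg). f_equal; ring.
Qed.

Lemma group_lasso_basic_inequality m n r g p A lambda xbar xstar J :
  1 <= p -> 0 <= lambda ->
  (forall j, (j < r)%nat -> J j = false -> forall i, (i < n)%nat -> g i = j -> xbar i = 0) ->
  sqnorm2 m (fun k => matvec n A xstar k - matvec n A xbar k) + lambda * fnorm p 1 n r g xstar
  <= sqnorm2 m (fun k => matvec n A xbar k - matvec n A xbar k) + lambda * fnorm p 1 n r g xbar ->
  sqnorm2 m (matvec n A (fun i => xstar i - xbar i))
  <= lambda * (mnorm p 1 n r g (fun i => xstar i - xbar i) J
               - mnorm p 1 n r g (fun i => xstar i - xbar i) (fun j => negb (J j))).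
Proof.
  intros Hp Hl Hsupp Hopt.
  assert (E0 : sqnorm2 m (fun k => matvec n A xbar k - matvec n A xbar k) = 0).
  { unfold sqnorm2. rewrite <- (sumR_zero m). apply sumR_ext; intros; simpl; ring. }
  assert (E : sqnorm2 m (fun k => matvec n A xstar k - matvec n A xbar k)
              = sqnorm2 m (matvec n A (fun i => xstar i - xbar i))).
  { unfold sqnorm2. apply sumR_ext; intros k _. rewrite matvec_sub. reflexivity. }
  pose proof (fnorm_1_sub_le p n r g xstar xbar J Hp Hsupp) as Hdec.
  apply Rmult_le_compat_l with (r := lambda) in Hdec; [|exact Hl].
  rewrite E0, E in Hopt. lra.
Qed.

Lemma basic_inequality_cone m n A x lambda a b :
  0 < lambda -> sqnorm2 m (matvec n A x) <= lambda * (a - b) -> b <= a.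
Proof.
  intros Hl H. assert (0 <= sqnorm2 m (matvec n A x)) by (apply sumR_nonneg; intros; apply pow2_ge_0).
  nra.
Qed.

(* phi^2 M^2 <= ||Ax||^2 <= lambda sqrt(S) M, with M the head norm over T u J. *)
Lemma grec_head_bound p m n r g A S phi lambda x J T :
  is_phi p 1 m n r g A S S phi -> 0 <= phi -> 0 < lambda -> cardP r J = S ->
  top_groups p n r g x J S T ->
  sqnorm2 m (matvec n A x)
  <= lambda * (mnorm p 1 n r g x J - mnorm p 1 n r g x (fun j => negb (J j))) ->
  mnorm p 2 n r g x (fun j => T j || J j) ^ 2 * phi ^ 4 <= lambda ^ 2 * INR S.
Proof.
  intros Hphi Hphi0 Hl HcJ HT Hbasic.
  set (Q := sqnorm2 m (matvec n A x)) in *.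
  set (M := mnorm p 2 n r g x (fun j => T j || J j)).
  set (c := lambda * sqrt (INR S)).
  assert (HQ : 0 <= Q) by (apply sumR_nonneg; intros; apply pow2_ge_0).
  assert (Hcone := basic_inequality_cone _ _ _ _ _ _ _ Hl Hbasic).
  assert (Hlow : phi * M <= sqrt Q) by (apply (is_phi_mul_le p 1 m n r g A S S phi x J T Hphi); auto; lia).
  assert (Hhead : mnorm p 1 n r g x J <= sqrt (INR S) * M).
  { rewrite <- HcJ. eapply Rle_trans; [apply mnorm_1_le_sqrt_card|].
    apply Rmult_le_compat_l; [apply sqrt_pos|].
    apply mnorm_2_subset. intros j _ ->. apply orb_true_r. }
  assert (HM : 0 <= M) by apply mnorm_2_nonneg.
  assert (Hc : 0 <= c) by (unfold c; pose proof (sqrt_pos (INR S)); nra).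
  assert (HQc : Q <= c * M).
  { pose proof (mnorm_1_nonneg p n r g x (fun j => negb (J j))). unfold c. nra. }
  assert (Hsq : (phi * M) ^ 2 <= c * M).
  { rewrite <- (pow2_sqrt Q) in HQc by exact HQ.
    apply Rle_trans with (sqrt Q ^ 2); [apply pow_incr; split; [nra|exact Hlow]|exact HQc]. }
  replace (lambda ^ 2 * INR S) with (c ^ 2)
    by (unfold c; rewrite Rpow_mult_distr, pow2_sqrt by apply pos_INR; reflexivity).
  destruct HM as [HM|<-]; [|simpl; nra].
  assert (phi ^ 2 * M <= c) by (apply Rmult_le_reg_r with M; [exact HM|nra]).
  replace (M ^ 2 * phi ^ 4) with ((phi ^ 2 * M) ^ 2) by ring.
  apply pow_incr. split; [nra|assumption].
Qed.

Lemma sumR_sq_le_twice_head p n r g x J T :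
  is_group_partition n r g -> 1 <= p <= 2 -> (0 < cardP r J)%nat ->
  top_groups p n r g x J (cardP r J) T ->
  mnorm p 1 n r g x (fun j => negb (J j)) <= mnorm p 1 n r g x J ->
  sumR n (fun i => x i ^ 2) <= 2 * mnorm p 2 n r g x (fun j => T j || J j) ^ 2.
Proof.
  intros Hpart Hp HcJ HT Hcone.
  pose proof (mnorm_2_tail_le p n r g x J T HcJ HT Hcone) as Htail.
  assert (HJN : mnorm p 2 n r g x J <= mnorm p 2 n r g x (fun j => T j || J j)).
  { apply mnorm_2_subset. intros j _ HJj. rewrite HJj. apply orb_true_r. }
  assert (Htail2 : mnorm p 2 n r g x (fun j => negb (T j || J j)) ^ 2
                   <= mnorm p 2 n r g x (fun j => T j || J j) ^ 2)
    by (apply pow_incr; split; [apply mnorm_2_nonneg|lra]).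
  pose proof (sumR_sq_le_group_norms p n r g x Hpart Hp) as Hgroups.
  rewrite (mnorm_2_sq_split p n r g x (fun j => T j || J j)) in Hgroups.
  lra.
Qed.

Theorem corollary2p1
  (m n r : nat) (g : nat -> nat) (p : R) (A : nat -> nat -> R)
  (xbar : nat -> R) (S : nat) (lambda : R) (xstar : nat -> R) (phi : R) :
  is_group_partition n r g ->
  1 <= p <= 2 ->
  (1 <= S)%nat ->
  (exists Jbar : nat -> bool,
     (forall j, (j < r)%nat -> (Jbar j = true <-> group_nonzero n g xbar j)) /\
     cardP r Jbar = S) ->
  is_phi p 1 m n r g A S S phi ->
  0 < phi ->
  0 < lambda ->
  (forall x : nat -> R,
     sqnorm2 m (fun k => matvec n A xstar k - matvec n A xbar k)
       + lambda * fnorm p 1 n r g xstar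
     <= sqnorm2 m (fun k => matvec n A x k - matvec n A xbar k)
       + lambda * fnorm p 1 n r g x) ->
  sumR n (fun i => (xstar i - xbar i) ^ 2) <= 2 * lambda ^ 2 * INR S / phi ^ 4.
Proof.
  intros Hpart Hp HS [J [HJ HcJ]] Hphi Hphi0 Hl Hopt.
  set (h := fun i => xstar i - xbar i).
  assert (Hsupp : forall j, (j < r)%nat -> J j = false ->
                  forall i, (i < n)%nat -> g i = j -> xbar i = 0).
  { intros j Hj HJj i Hi Hg. apply NNPP. intros Hne.
    assert (J j = true) by (apply HJ; [exact Hj|exists i; auto]). congruence. }
  pose proof (group_lasso_basic_inequality m n r g p A lambda xbar xstar J
                ltac:(lra) ltac:(lra) Hsupp (Hopt xbar)) as Hbasic.
  fold h in Hbasic.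
  destruct (top_groups_exist p n r g h J S) as [T HT].
  pose proof (grec_head_bound p m n r g A S phi lambda h J T Hphi ltac:(lra) Hl HcJ HT Hbasic)
    as Hhead.
  rewrite <- HcJ in HT.
  pose proof (sumR_sq_le_twice_head p n r g h J T Hpart Hp ltac:(lia) HT
                (basic_inequality_cone _ _ _ _ _ _ _ Hl Hbasic)) as Htwice.
  apply (Rle_trans _ _ _ Htwice).
  apply Rmult_le_reg_r with (phi ^ 4); [apply pow_lt, Hphi0|].
  replace (2 * lambda ^ 2 * INR S / phi ^ 4 * phi ^ 4) with (2 * (lambda ^ 2 * INR S))
    by (field; lra).
  lra.
Qed.
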